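(* Let $K,F,Z,S,u$ be positive integers and let $\mathbf{P}$ be a $(K,F,Z,S)$ placement delivery array (PDA). Then the $F\times uK$ array $[\mathbf{P}\,|\,\mathbf{P}\,|\,\cdots\,|\,\mathbf{P}]$ obtained by placing $u$ copies of $\mathbf{P}$ side by side is a $(uK,u,F,Z,S)$ EPDA.
   Context: Notation: $[n]=\{1,\dots,n\}$. PDA: an $F\times K$ array $\mathbf{P}=[p_{j,k}]$ with entries either a symbol $\star$ or integers in $[S]$ is a $(K,F,Z,S)$ PDA if: (D1) $\star$ appears exactly $Z$ times in each column; (D2) each integer in $[S]$ occurs at least once; (D3) for any two distinct entries with $p_{j_1,k_1}=p_{j_2,k_2}=s$ an integer, we have $j_1\neq j_2$, $k_1\neq k_2$, and $p_{j_1,k_2}=p_{j_2,k_1}=\star$. EPDA: an $F\times K$ array $\mathbf{A}=[a_{j,k}]$ with entries either $\star$ or integers in $[S]$ is a $(K,L,F,Z,S)$ EPDA (where $L\le K$ is a positive integer) if: (C1) $\star$ appears exactly $Z$ times in each column; (C2) every integer in $[S]$ occurs at least once; (C3) no integer appears more than once in any column; (C4) for each $s\in[S]$, letting $\mathbf{A}^{(s)}$ be the subarray obtained by deleting all rows and columns of $\mathbf{A}$ not containing $s$, no row of $\mathbf{A}^{(s)}$ contains more than $L$ integer entries. *)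

From mathcomp Require Import all_boot.
Set Implicit Arguments. Unset Strict Implicit. Unset Printing Implicit Defensive.

(* An F x K array with entries star (None) or integers (Some s). *)
Definition array (F K : nat) := 'I_F -> 'I_K -> option nat.

Definition is_int (e : option nat) : bool := if e is Some _ then true else false.

Definition is_PDA (K F Z S : nat) (P : array F K) : Prop :=
  (forall j k s, P j k = Some s -> 1 <= s <= S) /\
  (forall k : 'I_K, #|[set j : 'I_F | P j k == None]| = Z) /\
  (forall s, 1 <= s <= S -> exists j k, P j k = Some s) /\
  (forall (j1 j2 : 'I_F) (k1 k2 : 'I_K) s,
      (j1, k1) <> (j2, k2) -> P j1 k1 = Some s -> P j2 k2 = Some s ->
      [/\ j1 <> j2, k1 <> k2, P j1 k2 = None & P j2 k1 = None]).

Definition is_EPDA (K L F Z S : nat) (A : array F K) : Prop :=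
  (0 < L <= K) /\
  (forall j k s, A j k = Some s -> 1 <= s <= S) /\
  (forall k : 'I_K, #|[set j : 'I_F | A j k == None]| = Z) /\
  (forall s, 1 <= s <= S -> exists j k, A j k = Some s) /\
  (forall (k : 'I_K) (j1 j2 : 'I_F) s,
      A j1 k = Some s -> A j2 k = Some s -> j1 = j2) /\
  (* C4: in the subarray A^(s) (rows and columns containing s), each row has
     at most L integer entries *)
  (forall s (j : 'I_F), (exists k, A j k = Some s) ->
      #|[set k : 'I_K | [exists j', A j' k == Some s] && is_int (A j k)]| <= L).

(* [P | P | ... | P] with u copies: column k of the result is column k mod K of P *)
Definition hrep (F K u : nat) (HK : 0 < K) (P : array F K) : array F (u * K) :=
  fun j k => P j (Ordinal (ltn_pmod (nat_of_ord k) HK)).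
Arguments is_PDA K F Z S P : clear implicits.
Arguments is_EPDA K L F Z S A : clear implicits.
Arguments hrep {F K} u HK P.

From mathcomp Require Import all_boot.

Set Implicit Arguments.
Unset Strict Implicit.
Unset Printing Implicit Defensive.

(* Column k of [P | ... | P] is column (k mod K) of P.  If row j meets the
   integer s in column k0 of P, then by (D3) row j has a star in every other
   column of P containing s; so in the subarray for s the integer entries of
   row j lie in the u copies of column k0. *)

Definition pda_exchange (F K : nat) (P : array F K) : Prop :=
  forall (j1 j2 : 'I_F) (k1 k2 : 'I_K) s,
    (j1, k1) <> (j2, k2) -> P j1 k1 = Some s -> P j2 k2 = Some s ->
    [/\ j1 <> j2, k1 <> k2, P j1 k2 = None & P j2 k1 = None].

Section Exchange.

Variables (F K : nat) (P : array F K).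
Hypothesis exP : pda_exchange P.

Lemma exchange_col_inj (k : 'I_K) (j1 j2 : 'I_F) s :
  P j1 k = Some s -> P j2 k = Some s -> j1 = j2.
Proof.
move=> P1 P2; case: (eqVneq j1 j2) => // /eqP ne12.
by have [] := exP (fun e : (j1, k) = (j2, k) => ne12 (congr1 fst e)) P1 P2.
Qed.

Lemma exchange_same_col (j j' : 'I_F) (k0 k : 'I_K) s :
  P j k0 = Some s -> P j' k = Some s -> is_int (P j k) -> k = k0.
Proof.
move=> Pk0 Pk intk; case: (eqVneq k k0) => // /eqP ne.
have [_ _ _ star] := exP (fun e : (j', k) = (j, k0) => ne (congr1 snd e)) Pk Pk0.
by rewrite star in intk.
Qed.

End Exchange.

Section Repetition.

Variables (F K u : nat) (HK : 0 < K) (P : array F K).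

Definition col_mod (k : 'I_(u * K)) : 'I_K := Ordinal (ltn_pmod k HK).

Lemma hrepE j k : hrep u HK P j k = P j (col_mod k).
Proof. by []. Qed.

Lemma col_mod_surj (Hu : 0 < u) (k : 'I_K) : exists k', col_mod k' = k.
Proof.
have lt_k : k < u * K by rewrite (leq_trans (ltn_ord k)) ?leq_pmull.
by exists (Ordinal lt_k); apply: val_inj; rewrite /= modn_small.
Qed.

Lemma card_col_mod_class (k0 : 'I_K) : #|[set k | col_mod k == k0]| <= u.
Proof.
have lt_div (k : 'I_(u * K)) : k %/ K < u by rewrite ltn_divLR.
pose q k := Ordinal (lt_div k).
rewrite -[u in _ <= u]card_ord -(card_in_imset (f := q)) ?max_card //.
move=> k1 k2; rewrite !inE => /eqP/(congr1 val) /= m1 /eqP/(congr1 val) /= m2.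
move=> /(congr1 val) /= eq_div.
by apply: val_inj; rewrite /= (divn_eq k1 K) (divn_eq k2 K) eq_div m1 m2.
Qed.

Lemma hrep_subarray_row_card (s : nat) (j : 'I_F) :
  pda_exchange P -> (exists k, hrep u HK P j k = Some s) ->
  #|[set k | [exists j', hrep u HK P j' k == Some s] && is_int (hrep u HK P j k)]|
    <= u.
Proof.
move=> exP [k1 Pk1]; apply: leq_trans (card_col_mod_class (col_mod k1)).
apply/subset_leq_card/subsetP => k; rewrite !inE => /andP[/existsP[j' /eqP Pk] intk].
apply/eqP; exact: (exchange_same_col exP Pk1 Pk intk).
Qed.

End Repetition.

Theorem corollary1 (K F Z S u : nat) (HK : 0 < K) (HF : 0 < F) (HZ : 0 < Z)
  (HS : 0 < S) (Hu : 0 < u) (P : array F K) :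
  is_PDA K F Z S P -> is_EPDA (u * K) u F Z S (hrep u HK P).
Proof.
move=> [range [stars [occurs exP]]].
split; first by rewrite Hu leq_pmulr.
split; first by move=> j k s; apply: range.
split; first by move=> k; apply: stars.
split.
  move=> s /occurs[j [k Pjk]].
  have [k' col_k'] := col_mod_surj HK Hu k.
  by exists j, k'; rewrite hrepE col_k'.
split.
  by move=> k j1 j2 s; rewrite !hrepE; apply: (exchange_col_inj (P := P) exP).
by move=> s j; apply: hrep_subarray_row_card.
Qed.
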